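(* Let $Z=Z_\Sigma$ be a toric variety with a non-degenerate simplicial fan $\Sigma$ in $N=\mathbb{Z}^r$, with notation as in the context. Then \[ [\operatorname{Cl}(Z):\operatorname{Pic}(Z)] \;=\; \frac{1}{|\hat K|}\prod_{\sigma\in\Sigma_{\max}}|K_\sigma|. \]
   Context: Non-degenerate means the primitive ray generators $v_1,\dots,v_n$ of $\Sigma$ generate $\mathbb{Q}^r$ as a convex cone (completeness is not required). Let $F=\mathbb{Z}^n$, $P\colon F\to N$, $e_i\mapsto v_i$, $M=N^*$, $E=F^*$, $K=E/P^*(M)\cong\operatorname{Cl}(Z)$. For $\sigma=\operatorname{cone}(v_{i_1},\dots,v_{i_{n_\sigma}})\in\Sigma_{\max}$ let $N_\sigma=\operatorname{lin}_{\mathbb{Q}}(\sigma)\cap N$, $F_\sigma=\mathbb{Z}^{n_\sigma}$, $P_\sigma\colon F_\sigma\to N_\sigma$, $e_j\mapsto v_{i_j}$, $\beta_\sigma\colon F_\sigma\to F$, $e_j\mapsto e_{i_j}$, $K_\sigma=F_\sigma^*/P_\sigma^*(N_\sigma^* )\cong\operatorname{Cl}(U_\sigma)$ (class group of the affine chart), and $\pi_\sigma\colon K\to K_\sigma$ the map induced by $\beta_\sigma^*$ (restriction of classes). Let $\pi\colon K\to\bigoplus_{\sigma\in\Sigma_{\max}}K_\sigma$, $w\mapsto(\pi_\sigma(w))_\sigma$, and $\hat K=\big(\bigoplus_\sigma K_\sigma\big)/\pi(K)$. *)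

From HB Require Import structures.
From mathcomp Require Import all_boot all_order all_algebra.
Set Implicit Arguments. Unset Strict Implicit. Unset Printing Implicit Defensive.
Import Order.TTheory GRing.Theory Num.Theory.
Local Open Scope ring_scope.

(* [quot_card A B k]: the quotient of the subgroup A of G by the relation
   x ~ y <-> x - y \in B has exactly k classes (B is a subgroup, its
   intersection with A being the subgroup we quotient by). *)
Definition quot_card (G : zmodType) (A B : G -> Prop) (k : nat) : Prop :=
  exists s : seq G,
    [/\ size s = k,
        forall i, (i < size s)%N -> A (nth 0 s i),
        forall i j, (i < size s)%N -> (j < size s)%N -> i <> j ->
           ~ B (nth 0 s i - nth 0 s j)
      & forall a, A a -> exists i, (i < size s)%N /\ B (a - nth 0 s i)].

(* N = Z^r as row vectors, M = N^vee also as row vectors, with pairing: *)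
Definition pairing (r : nat) (m x : 'rV[int]_r) : int := \sum_(j < r) m 0 j * x 0 j.

Definition toQ (r : nat) (x : 'rV[int]_r) : 'rV[rat]_r := map_mx (fun z : int => z%:~R) x.

Definition primitive (r : nat) (x : 'rV[int]_r) : Prop :=
  forall d : nat, (forall j, x 0 j \in dvdz d) -> d = 1%N.

Definition in_cone (r n : nat) (v : 'I_n -> 'rV[int]_r) (S : {set 'I_n}) (x : 'rV[rat]_r) : Prop :=
  exists c : 'I_n -> rat, (forall i, 0 <= c i) /\ (forall i, i \notin S -> c i = 0) /\
    x = \sum_(i < n) c i *: toQ (v i).

Definition in_span (r n : nat) (v : 'I_n -> 'rV[int]_r) (S : {set 'I_n}) (x : 'rV[rat]_r) : Prop :=
  exists c : 'I_n -> rat, (forall i, i \notin S -> c i = 0) /\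
    x = \sum_(i < n) c i *: toQ (v i).

Definition lin_indep (r n : nat) (v : 'I_n -> 'rV[int]_r) (S : {set 'I_n}) : Prop :=
  forall c : 'I_n -> rat, (forall i, i \notin S -> c i = 0) ->
    \sum_(i < n) c i *: toQ (v i) = 0 -> forall i, c i = 0.

(* A simplicial fan Sigma in N = Z^r with primitive ray generators v_1..v_n,
   given by its set Smax of maximal cones, each maximal cone sigma being
   encoded by the index set {i | v_i is a ray of sigma}; cone(sigma) =
   cone(v_i : i in sigma).  The cones of Sigma are the faces of the maximal
   cones, i.e. cone(tau) for tau \subset sigma \in Smax. *)
Definition simplicial_fan (r n : nat) (v : 'I_n -> 'rV[int]_r)
    (Smax : {set {set 'I_n}}) : Prop :=
  [/\ (forall i, primitive (v i)) /\ injective v,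
      Smax != set0 /\ (forall i, exists2 s, s \in Smax & i \in s),
      (forall s, s \in Smax -> lin_indep v s),
      (forall s t, s \in Smax -> t \in Smax -> forall x,
          (in_cone v s x /\ in_cone v t x) <-> in_cone v (s :&: t) x)
    &
      (forall s t, s \in Smax -> t \in Smax -> s \subset t -> s = t)].

Definition nondegenerate_rays (r n : nat) (v : 'I_n -> 'rV[int]_r) : Prop :=
  forall x : 'rV[rat]_r, in_cone v setT x.

(* ---------- Cl(Z) = K = E / P^vee(M), E = Z^n ---------- *)
Definition Eall (n : nat) (D : 'rV[int]_n) : Prop := True.

Definition principal (r n : nat) (v : 'I_n -> 'rV[int]_r) (D : 'rV[int]_n) : Prop :=
  exists m : 'rV[int]_r, forall i, D 0 i = pairing m (v i).

Definition cartier (r n : nat) (v : 'I_n -> 'rV[int]_r) (Smax : {set {set 'I_n}})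
    (D : 'rV[int]_n) : Prop :=
  forall s, s \in Smax -> forall tau : {set 'I_n}, tau \subset s ->
    exists m : 'rV[int]_r, forall i, i \in tau -> D 0 i = pairing m (v i).

(* x \in E represents a class of Cl(Z) = K lying in Pic(Z)
   = CDiv_T(Z)/P^vee(M) \subset K. *)
Definition in_Pic (r n : nat) (v : 'I_n -> 'rV[int]_r) (Smax : {set {set 'I_n}})
    (x : 'rV[int]_n) : Prop :=
  exists D, cartier v Smax D /\ principal v (x - D).

Definition index_Cl_Pic (r n : nat) (v : 'I_n -> 'rV[int]_r) (Smax : {set {set 'I_n}})
    (k : nat) : Prop :=
  quot_card (@Eall n) (in_Pic v Smax) k.

(* ---------- K_sigma = F_sigma^vee / P_sigma^vee(N_sigma^vee) ---------- *)
(* F_sigma^vee = Z^{n_sigma} is encoded as the vectors of Z^n supported on sigma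
   (coordinate j of F_sigma^vee <-> coordinate i_j of Z^n). *)
Definition Fdual (n : nat) (s : {set 'I_n}) (y : 'rV[int]_n) : Prop :=
  forall i, i \notin s -> y 0 i = 0.

Definition Nsig (r n : nat) (v : 'I_n -> 'rV[int]_r) (s : {set 'I_n}) (x : 'rV[int]_r) : Prop :=
  in_span v s (toQ x).

(* phi restricted to N_sigma is an element of N_sigma^vee = Hom(N_sigma, Z) *)
Definition Nsig_dual (r n : nat) (v : 'I_n -> 'rV[int]_r) (s : {set 'I_n})
    (phi : 'rV[int]_r -> int) : Prop :=
  forall x y, Nsig v s x -> Nsig v s y -> phi (x + y) = phi x + phi y.

Definition PsigImg (r n : nat) (v : 'I_n -> 'rV[int]_r) (s : {set 'I_n}) (y : 'rV[int]_n) : Prop :=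
  Fdual s y /\ exists phi, Nsig_dual v s phi /\ forall i, i \in s -> y 0 i = phi (v i).

Definition card_Ksig (r n : nat) (v : 'I_n -> 'rV[int]_r) (s : {set 'I_n}) (k : nat) : Prop :=
  quot_card (Fdual s) (PsigImg v s) k.

(* ---------- hat K = (\oplus_sigma K_sigma) / pi(K) ---------- *)
(* elements of \oplus_{sigma in Smax} F_sigma^vee : families X sigma, zero for
   sigma outside Smax *)
Definition SumF (n : nat) (Smax : {set {set 'I_n}}) (X : {ffun {set 'I_n} -> 'rV[int]_n}) : Prop :=
  forall s, (s \in Smax -> Fdual s (X s)) /\ (s \notin Smax -> X s = 0).

Definition restr (n : nat) (s : {set 'I_n}) (w : 'rV[int]_n) : 'rV[int]_n :=
  \row_i (if i \in s then w 0 i else 0).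

Definition in_piK (r n : nat) (v : 'I_n -> 'rV[int]_r) (Smax : {set {set 'I_n}})
    (X : {ffun {set 'I_n} -> 'rV[int]_n}) : Prop :=
  exists w : 'rV[int]_n, forall s, s \in Smax -> PsigImg v s (X s - restr s w).

Definition card_Khat (r n : nat) (v : 'I_n -> 'rV[int]_r) (Smax : {set {set 'I_n}}) (k : nat) : Prop :=
  quot_card (SumF Smax) (in_piK v Smax) k.

(* Write H for the direct sum of the F_sigma^vee, Q <= H for the sum of the
   P_sigma^vee(N_sigma^vee) and S = pi(K) + Q. Then [H : Q] = prod |K_sigma|,
   each factor being finite because simpliciality puts d F_sigma^vee inside
   P_sigma^vee(N_sigma^vee) for some d > 0, and [H : S] = |hat K|, so
   [S : Q] = prod |K_sigma| / |hat K|. The restriction E -> H maps onto S modulo Q,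
   and its preimage of Q consists of the divisors given on each maximal cone by a
   linear form on N_sigma; as N_sigma is saturated in N, such a form extends to M,
   so these are exactly the T-Cartier divisors and [S : Q] = [Cl(Z) : Pic(Z)]. *)

From mathcomp Require Import all_boot all_order all_algebra.
From mathcomp Require Import boolp.
Import Order.TTheory GRing.Theory Num.Theory.
Local Open Scope ring_scope.
Set Implicit Arguments. Unset Strict Implicit. Unset Printing Implicit Defensive.

Section Index.
Variable G : zmodType.
Implicit Types A B S Q : G -> Prop.

Definition is_subgroup B := B 0 /\ forall x y, B x -> B y -> B (x - y).

Lemma subgroupN B : is_subgroup B -> forall x, B x -> B (- x).
Proof. by case=> B0 BB x Bx; rewrite -sub0r; apply: BB. Qed.

Lemma subgroupD B : is_subgroup B -> forall x y, B x -> B y -> B (x + y).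
Proof. by move=> sB x y Bx By; rewrite -[y]opprK; apply: sB.2 (subgroupN sB By). Qed.

Lemma subgroup_trans B : is_subgroup B ->
  forall x y z, B (x - y) -> B (y - z) -> B (x - z).
Proof. by move=> sB x y z Bxy Byz; rewrite -[x](subrK y) -addrA; apply: subgroupD. Qed.

Lemma subgroup_sym B : is_subgroup B -> forall x y, B (x - y) -> B (y - x).
Proof. by move=> sB x y /(subgroupN sB); rewrite opprB. Qed.

Definition transversal A B (T : finType) (g : T -> G) :=
  [/\ forall t, A (g t), forall t t', B (g t - g t') -> t = t'
    & forall a, A a -> exists t, B (a - g t)].

Lemma quot_card_transversal A B (T : finType) (g : T -> G) :
  transversal A B g -> quot_card A B #|T|.
Proof.
case=> Ag gB covg; exists (map g (enum T)); rewrite size_map -cardE.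
have nth_g i (lti : (i < #|T|)%N) : nth 0 (map g (enum T)) i = g (enum_val (Ordinal lti)).
  rewrite (nth_map (enum_val (Ordinal lti))) -?cardE //.
  by congr g; apply: set_nth_default; rewrite -cardE.
split=> //.
- by move=> i lti; rewrite nth_g; apply: Ag.
- move=> i j lti ltj neq_ij; rewrite nth_g nth_g => /gB /enum_val_inj [eq_ij].
  exact: neq_ij.
- move=> a /covg [t Bt]; exists (enum_rank t); split; first exact: ltn_ord.
  rewrite nth_g; have -> : Ordinal (ltn_ord (enum_rank t)) = enum_rank t by apply: val_inj.
  by rewrite enum_rankK.
Qed.

Lemma transversal_quot_card A B k :
  quot_card A B k -> exists g : 'I_k -> G, transversal A B g.
Proof.
case=> s [<- As sB covs]; exists (fun i : 'I_(size s) => nth 0 s i); split.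
- by move=> i; apply: As.
- move=> i j Bij; apply/val_inj/eqP/negPn/negP => /eqP neq_ij; exact: sB Bij.
- by move=> a /covs [i [lti Bi]]; exists (Ordinal lti).
Qed.

Lemma quot_card_gt0 A B k : A 0 -> quot_card A B k -> (0 < k)%N.
Proof. by move=> A0 [s [<- _ _ /(_ 0 A0) [i [lti _]]]]; apply: leq_ltn_trans lti. Qed.

Lemma transversal_card_le A B (T1 T2 : finType) (g1 : T1 -> G) (g2 : T2 -> G) :
  is_subgroup B -> transversal A B g1 -> transversal A B g2 -> (#|T1| <= #|T2|)%N.
Proof.
move=> sB [Ag1 g1B _] [_ _ cov2].
have /all_sig [h Bh] : forall t, {t2 | B (g1 t - g2 t2)}.
  by move=> t; apply: cid; apply: cov2.
apply: (@leq_card _ _ h) => t t' eq_h; apply: g1B.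
by apply: (subgroup_trans sB (Bh t)); rewrite eq_h; apply: subgroup_sym.
Qed.

Lemma transversal_card A B (T1 T2 : finType) (g1 : T1 -> G) (g2 : T2 -> G) :
  is_subgroup B -> transversal A B g1 -> transversal A B g2 -> #|T1| = #|T2|.
Proof.
move=> sB tr1 tr2.
by apply/eqP; rewrite eqn_leq (transversal_card_le sB tr1 tr2) (transversal_card_le sB tr2 tr1).
Qed.

(* Among the indices [t] with the same class, keep the one of least rank. *)
Lemma quot_card_of_cover A B (T : finType) (g : T -> G) : is_subgroup B ->
  (forall t, A (g t)) -> (forall a, A a -> exists t, B (a - g t)) ->
  exists k, quot_card A B k.
Proof.
move=> sB Ag covg.
pose least t := `[< forall t', B (g t - g t') -> (enum_rank t <= enum_rank t')%N >].
pose T' : finType := {t : T | least t}.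
exists #|T'|; apply: (@quot_card_transversal _ _ _ (fun t : T' => g (val t))); split.
- by move=> t; apply: Ag.
- move=> [t1 least1] [t2 least2] /= B12; apply/val_inj/enum_rank_inj/val_inj/eqP => /=.
  move/asboolP: least1 => min1; move/asboolP: least2 => min2.
  by rewrite eqn_leq min1 // min2 //; apply: subgroup_sym.
- move=> a /covg [t Bt].
  pose same t' := `[< B (g t - g t') >].
  have same_t : same t by apply/asboolP; rewrite subrr; apply: sB.1.
  have [t0 /asboolP Bt0 min0] := arg_minnP (fun t' => val (enum_rank t')) same_t.
  have least_t0 : least t0.
    apply/asboolP => t' Bt'; apply: min0; apply/asboolP.
    exact: (subgroup_trans sB Bt0 Bt').
  by exists (exist _ t0 least_t0); exact: (subgroup_trans sB Bt Bt0).
Qed.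

Lemma transversal_restrict A S Q (T : finType) (g : T -> G) :
  is_subgroup S -> (forall x, Q x -> S x) -> transversal A Q g ->
  transversal (fun x => A x /\ S x) Q
    (fun t : {t : T | `[< S (g t) >]} => g (val t)).
Proof.
move=> sS QS [Ag gQ covg]; split.
- by move=> [t St]; split; [apply: Ag | apply/asboolP].
- by move=> [t p] [t' p'] /= /gQ eq_t; apply/val_inj.
- move=> a [Aa Sa]; have [t Qt] := covg a Aa.
  have St : `[< S (g t) >].
    by apply/asboolP; rewrite -[g t](subKr a); apply: sS.2 Sa (QS _ Qt).
  by exists (exist _ t St).
Qed.

Lemma transversal_tower A S Q (T1 T2 : finType) (g1 : T1 -> G) (g2 : T2 -> G) :
  is_subgroup A -> is_subgroup S -> (forall x, Q x -> S x) ->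
  transversal A S g1 -> transversal (fun x => A x /\ S x) Q g2 ->
  transversal A Q (fun p : T1 * T2 => g1 p.1 + g2 p.2).
Proof.
move=> sA sS QS [Ag1 g1S cov1] [ASg2 g2Q cov2]; split.
- by move=> [t1 t2]; apply: subgroupD (Ag1 t1) (ASg2 t2).1.
- move=> [t1 t2] [t1' t2'] /= Q12.
  have eq1 : t1 = t1'.
    apply: g1S; have := sS.2 _ _ (QS _ Q12) (sS.2 _ _ (ASg2 t2).2 (ASg2 t2').2).
    by rewrite opprD addrACA addrK.
  rewrite -eq1 in Q12 *; congr (_, _); apply: g2Q.
  by move: Q12; rewrite opprD addrACA subrr add0r.
- move=> x Ax; have [t1 St1] := cov1 x Ax.
  have [t2 Qt2] := cov2 (x - g1 t1) (conj (sA.2 _ _ Ax (Ag1 t1)) St1).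
  by exists (t1, t2); rewrite opprD addrA.
Qed.

Lemma index_mul A S Q (T : finType) (g : T -> G) :
  is_subgroup A -> is_subgroup S -> is_subgroup Q -> (forall x, Q x -> S x) ->
  transversal A Q g ->
  exists k l, [/\ quot_card A S k, quot_card (fun x => A x /\ S x) Q l
                 & #|T| = (k * l)%N].
Proof.
move=> sA sS sQ QS trg; have [Ag _ covg] := trg.
have [k AS_k] : exists k, quot_card A S k.
  by apply: quot_card_of_cover sS Ag _ => a /covg [t Qt]; exists t; apply: QS.
have [g1 tr1] := transversal_quot_card AS_k.
have tr2 := transversal_restrict sS QS trg.
exists k, #|[pred t | `[< S (g t) >]]|; rewrite -card_sig; split=> //.
  exact: quot_card_transversal tr2.
rewrite -[k in (k * _)%N]card_ord -card_prod.
exact: transversal_card sQ trg (transversal_tower sA sS QS tr1 tr2).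
Qed.

End Index.

Lemma quot_card_preimage (G1 G2 : zmodType) (f : G1 -> G2) (A S Q : G2 -> Prop)
    (P : G1 -> Prop) k :
  {morph f : x y / x - y} -> is_subgroup Q -> (forall w, A (f w)) ->
  (forall x, S x <-> exists w, Q (x - f w)) -> (forall w, P w <-> Q (f w)) ->
  quot_card (fun x => A x /\ S x) Q k -> quot_card (fun _ => True) P k.
Proof.
move=> fB sQ Af SE PE /transversal_quot_card [g [ASg gQ covg]].
have /all_sig [h Qh] : forall t, {w | Q (g t - f w)}.
  by move=> t; apply: cid; apply/SE; case: (ASg t).
rewrite -[k]card_ord; apply: (@quot_card_transversal _ _ _ _ h); split=> //.
- move=> t t' /PE; rewrite fB => Qhh; apply: gQ.
  apply: (subgroup_trans sQ (Qh t)); apply: (subgroup_trans sQ Qhh).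
  exact: (subgroup_sym sQ (Qh t')).
- move=> w _; have [|t Qt] := covg (f w).
    by split=> //; apply/SE; exists w; rewrite subrr; apply: sQ.1.
  by exists t; apply/PE; rewrite fB; apply: (subgroup_trans sQ Qt (Qh t)).
Qed.

Lemma rat_mx_common_denom m p (A : 'M[rat]_(m, p)) :
  exists2 d : nat, (0 < d)%N &
    exists B : 'M[int]_(m, p), map_mx (fun z : int => z%:~R) B = d%:R *: A.
Proof.
pose den q := denq (A q.1 q.2).
exists (\prod_(q : 'I_m * 'I_p) `|den q|)%N.
  by rewrite prodn_gt0 // => q; rewrite absz_gt0 denq_neq0.
exists (\matrix_(k, i) (numq (A k i) * \prod_(q | q != (k, i)) den q)).
have den_abs q : (`|den q|%:R : rat) = (den q)%:~R by rewrite /den -absz_denq.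
apply/matrixP => k i; rewrite !mxE intrM numqE rmorph_prod natr_prod.
rewrite [in RHS](bigD1 (k, i)) //= den_abs [RHS]mulrC mulrA; congr (_ * _).
by apply: eq_bigr => q _; rewrite den_abs.
Qed.

Lemma pairingE r (m x : 'rV[int]_r) : pairing m x = (x *m m^T) 0 0.
Proof. by rewrite /pairing !mxE; apply: eq_bigr => j _; rewrite mxE mulrC. Qed.

Section Cone.
Variables (r n : nat) (v : 'I_n -> 'rV[int]_r) (s : {set 'I_n}).

Definition rays_mx : 'M[int]_(n, r) := \matrix_(j, k) (if j \in s then v j 0 k else 0).
Definition raysQ : 'M[rat]_(n, r) := map_mx (fun z : int => z%:~R) rays_mx.

Lemma row_rays_mx j : j \in s -> row j rays_mx = v j.
Proof. by move=> js; apply/rowP => k; rewrite !mxE js. Qed.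

Lemma row_raysQ j : row j raysQ = if j \in s then toQ (v j) else 0.
Proof. by apply/rowP => k; rewrite !mxE; case: ifP; rewrite ?mxE. Qed.

Lemma mul_raysQ (u : 'rV[rat]_n) :
  u *m raysQ = \sum_(j < n) (if j \in s then u 0 j else 0) *: toQ (v j).
Proof.
rewrite mulmx_sum_row; apply: eq_bigr => j _.
by rewrite row_raysQ; case: ifP; rewrite ?scale0r ?scaler0.
Qed.

Lemma in_span_submx x : in_span v s x <-> (x <= raysQ)%MS.
Proof.
split=> [[c [c0 ->]] | /submxP [u ->]].
  apply/submxP; exists (\row_j c j); rewrite mul_raysQ; apply: eq_bigr => j _.
  by rewrite mxE; case: ifPn => // /c0 ->.
exists (fun j => if j \in s then u 0 j else 0).
by split=> [j /negPf -> | ]; last exact: mul_raysQ.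
Qed.

Lemma lin_indep_mul_raysQ (u : 'rV[rat]_n) : lin_indep v s ->
  u *m raysQ = 0 -> forall i, i \in s -> u 0 i = 0.
Proof.
move=> indep u0 i is_; rewrite mul_raysQ in u0.
have := indep (fun j => if j \in s then u 0 j else 0) _ u0 i.
by rewrite is_; apply=> j /negPf ->.
Qed.

Lemma pinv_raysQ_dual j i : lin_indep v s -> j \in s -> i \in s ->
  (toQ (v j) *m pinvmx raysQ) 0 i = (i == j)%:R.
Proof.
move=> indep js is_.
have vj_sub : (toQ (v j) <= raysQ)%MS by have := row_sub j raysQ; rewrite row_raysQ js.
set c := toQ (v j) *m pinvmx raysQ.
have c0 : (c - delta_mx 0 j) *m raysQ = 0.
  by rewrite mulmxBl mulmxKpV // -rowE row_raysQ js subrr.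
have := lin_indep_mul_raysQ indep c0 is_.
by rewrite !mxE eqxx /= eq_sym => /subr0_eq.
Qed.

Lemma int_dual_basis : lin_indep v s ->
  exists2 d : nat, (0 < d)%N & exists M : 'M[int]_(r, n),
    forall j i, j \in s -> i \in s -> (v j *m M) 0 i = if i == j then d%:Z else 0.
Proof.
move=> indep; have [d d_gt0 [M eM]] := rat_mx_common_denom (pinvmx raysQ).
exists d => //; exists M => j i js is_; apply: (@intr_inj rat).
have := congr1 (fun A => (toQ (v j) *m A) 0 i) eM.
rewrite /= -map_mxM -scalemxAr [in X in X -> _]mxE [X in _ = X -> _]mxE.
rewrite pinv_raysQ_dual // => ->.
by case: eqP; rewrite ?mulr1 ?mulr0.
Qed.

Lemma PsigImg_subgroup : is_subgroup (PsigImg v s).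
Proof.
split.
  split=> [i _|]; first by rewrite mxE.
  by exists (fun _ => 0); split=> [x y _ _|i _]; rewrite ?addr0 ?mxE.
move=> y1 y2 [F1 [phi1 [phi1D phi1v]]] [F2 [phi2 [phi2D phi2v]]]; split.
  by move=> i i_s; rewrite !mxE F1 ?F2 ?subr0.
exists (fun x => phi1 x - phi2 x); split=> [x y Nx Ny | i i_s].
  by rewrite phi1D ?phi2D // opprD addrACA.
by rewrite !mxE phi1v ?phi2v.
Qed.

Lemma PsigImg_scale : lin_indep v s ->
  exists2 d : nat, (0 < d)%N & forall y, Fdual s y -> PsigImg v s (d%:Z *: y).
Proof.
move=> /int_dual_basis [d d_gt0 [M eM]]; exists d => // y Fy; split.
  by move=> i /Fy; rewrite mxE => ->; rewrite mulr0.
exists (fun x => \sum_(i in s) (x *m M) 0 i * y 0 i); split=> [x x' _ _ | j js].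
  by rewrite -big_split; apply: eq_bigr => i _; rewrite mulmxDl mxE mulrDl.
rewrite mxE (bigD1 j) //= big1 ?addr0 => [|i /andP [is_ neq_ij]].
  by rewrite eM // eqxx.
by rewrite eM // (negPf neq_ij) mul0r.
Qed.

Lemma card_Ksig_exists : lin_indep v s -> exists k, card_Ksig v s k.
Proof.
move=> /PsigImg_scale [d d_gt0 scaleP].
have d_neq0 : d%:Z != 0 by rewrite eqz_nat -lt0n.
pose g (t : {ffun 'I_n -> 'I_d}) : 'rV[int]_n :=
  \row_i (if i \in s then (t i : nat)%:Z else 0).
apply: (quot_card_of_cover (g := g) PsigImg_subgroup) => [t i /negPf i_s | y Fy].
  by rewrite mxE i_s.
have mod_lt i : (`|modz (y 0%R i) d| < d)%N.
  by rewrite -ltz_nat gez0_abs ?modz_ge0 ?ltz_pmod.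
exists [ffun i => Ordinal (mod_lt i)].
have -> : y - g [ffun i => Ordinal (mod_lt i)] =
          d%:Z *: \row_i (if i \in s then divz (y 0 i) d else 0).
  apply/rowP => i; rewrite !mxE ffunE /=.
  case: ifPn => [_ | /Fy ->]; last by rewrite subr0 mulr0.
  by rewrite gez0_abs ?modz_ge0 // {1}(divz_eq (y _ _) d) addrK mulrC.
by apply: (scaleP _) => i /negPf i_s; rewrite mxE i_s.
Qed.

Lemma Nsig0 : Nsig v s 0.
Proof. by apply/in_span_submx; rewrite /toQ map_mx0 sub0mx. Qed.

Lemma NsigD x y : Nsig v s x -> Nsig v s y -> Nsig v s (x + y).
Proof.
move=> /in_span_submx Nx /in_span_submx Ny; apply/in_span_submx.
by rewrite /toQ map_mxD addmx_sub.
Qed.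

Lemma NsigZ a x : Nsig v s x -> Nsig v s (a *: x).
Proof. by move=> /in_span_submx Nx; apply/in_span_submx; rewrite /toQ map_mxZ scalemx_sub. Qed.

Section NsigDual.
Variable phi : 'rV[int]_r -> int.
Hypothesis phiD : Nsig_dual v s phi.

Lemma Nsig_dual0 : phi 0 = 0.
Proof. by apply: (addrI (phi 0)); rewrite -phiD ?addr0 //; apply: Nsig0. Qed.

Lemma Nsig_dualN x : Nsig v s x -> phi (- x) = - phi x.
Proof.
move=> Nx; have Nnx : Nsig v s (- x) by rewrite -scaleN1r; apply: NsigZ.
by apply: (addrI (phi x)); rewrite -phiD // subrr Nsig_dual0 subrr.
Qed.

Lemma Nsig_dualZ a x : Nsig v s x -> phi (a *: x) = a * phi x.
Proof.
move=> Nx; have phiMn (m : nat) : phi (m%:Z *: x) = m%:Z * phi x.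
  elim: m => [|m IH]; first by rewrite scale0r mul0r Nsig_dual0.
  by rewrite intS scalerDl scale1r phiD ?IH ?mulrDl ?mul1r //; apply: NsigZ.
case: a => m; first exact: phiMn.
by rewrite NegzE scaleNr mulNr Nsig_dualN ?phiMn //; apply: NsigZ.
Qed.

Lemma Nsig_dual_sum (I : finType) (P : pred I) (F : I -> int) (X : I -> 'rV[int]_r) :
  (forall t, P t -> Nsig v s (X t)) ->
  phi (\sum_(t | P t) F t *: X t) = \sum_(t | P t) F t * phi (X t).
Proof.
move=> NX; pose K y1 y2 := Nsig v s y1 /\ phi y1 = y2.
suff [] : K (\sum_(t | P t) F t *: X t) (\sum_(t | P t) F t * phi (X t)) by [].
apply: big_rec2 => [|t y1 y2 Pt [Ny1 <-]]; first by split; [apply: Nsig0 | apply: Nsig_dual0].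
have NFX := NsigZ (F t) (NX t Pt); split; first exact: NsigD.
by rewrite phiD // Nsig_dualZ //; apply: NX.
Qed.

(* Saturation of [N_sigma]: if [rays_mx = L D R] is in Smith normal form, the rows
   of [R] with a nonzero invariant factor lie in [N_sigma] and every [v i] is an
   integer combination of them; since [R] is unimodular, [phi] is the pairing with
   the vector taking the values [phi (row t R)] in the dual basis. *)
Lemma Nsig_dual_pairing : exists m, forall i, i \in s -> phi (v i) = pairing m (v i).
Proof.
have [L L_unit [R R_unit [d _ raysE]]] := int_Smith_normal_form rays_mx.
set D := \matrix_(i, j) _ in raysE.
pose good (t : 'I_r) := (t < n)%N && (d`_t != 0).
have coord0 i t : i \in s -> ~~ good t -> (v i *m invmx R) 0 t = 0.
  move=> is_ bad_t; rewrite -(row_rays_mx is_) -row_mul raysE mulmxK // !mxE.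
  apply: big1 => k _; rewrite !mxE; case: eqP => [ekt | _]; last by rewrite mulr0n mulr0.
  by move: bad_t; rewrite /good -ekt ltn_ord /= negbK => /eqP ->; rewrite mul0rn mulr0.
have good_Nsig t : good t -> Nsig v s (row t R).
  case/andP => lt_tn dt_neq0; pose t' := Ordinal lt_tn.
  have rowD : row t' D = d`_t *: delta_mx 0 t.
    by apply/rowP => k; rewrite !mxE eqxx /= eq_sym mulr_natr.
  have rowLR : row t' (invmx L *m rays_mx) = d`_t *: row t R.
    by rewrite raysE !mulmxA mulVmx // mul1mx row_mul rowD -scalemxAl -rowE.
  have : (toQ (d`_t *: row t R) <= raysQ)%MS.
    by rewrite -rowLR /toQ map_row map_mxM row_mul submxMl.
  rewrite /toQ map_mxZ => /(scalemx_sub ((d`_t)%:~R)^-1); rewrite scalerA mulVf ?scale1r.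
    by move/in_span_submx.
  by rewrite intr_eq0.
exists ((\row_t phi (row t R)) *m (invmx R)^T) => i is_.
have vi_sum : v i = \sum_(t | good t) (v i *m invmx R) 0 t *: row t R.
  rewrite -{1}[v i](mulmxKV R_unit) mulmx_sum_row [RHS]big_mkcond.
  by apply: eq_bigr => t _; case: ifPn => // /(coord0 i t is_) ->; rewrite scale0r.
rewrite pairingE trmx_mul trmxK mulmxA {1}vi_sum Nsig_dual_sum // mxE [LHS]big_mkcond.
apply: eq_bigr => t _.
by case: ifPn => [_ | /(coord0 i t is_) ->]; rewrite ?mul0r // !mxE.
Qed.

End NsigDual.

End Cone.

Lemma card_ord_dffun (I : finType) (k : I -> nat) :
  #|{dffun forall i : I, 'I_(k i)}| = (\prod_i k i)%N.
Proof.
rewrite card_dep_ffun foldrE big_map big_enum /=.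
by apply: eq_bigr => i _; apply: card_ord.
Qed.

Lemma restrB n (s : {set 'I_n}) : {morph restr s : x y / x - y}.
Proof. by move=> x y; apply/rowP => i; rewrite !mxE; case: ifP; rewrite ?subr0. Qed.

Lemma Fdual_restr n (s : {set 'I_n}) (x : 'rV[int]_n) : Fdual s (restr s x).
Proof. by move=> i /negPf i_s; rewrite mxE i_s. Qed.

Section Fan.
Variables (r n : nat) (v : 'I_n -> 'rV[int]_r) (Smax : {set {set 'I_n}}).

Local Notation family := {ffun {set 'I_n} -> 'rV[int]_n}.

Definition SumPsigImg (X : family) := forall s, s \in Smax -> PsigImg v s (X s).

Definition restr_sum (w : 'rV[int]_n) : family :=
  [ffun s => if s \in Smax then restr s w else 0].

Lemma restr_sumB : {morph restr_sum : x y / x - y}.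
Proof. by move=> x y; apply/ffunP => s; rewrite !ffunE; case: ifP; rewrite ?restrB ?subr0. Qed.

Lemma restr_sum0 : restr_sum 0 = 0.
Proof.
by apply/ffunP => s; rewrite !ffunE; case: ifP => // _; apply/rowP => i; rewrite !mxE if_same.
Qed.

Lemma SumF_restr_sum w : SumF Smax (restr_sum w).
Proof. by move=> s; rewrite ffunE; case: ifP => s_in; split=> // _; apply: Fdual_restr. Qed.

Lemma SumF_subgroup : is_subgroup (SumF Smax).
Proof.
split=> [s | X Y SX SY s]; rewrite !ffunE; first by split=> // _ i _; rewrite mxE.
split=> [s_in i i_s | s_out]; last by rewrite (SX s).2 ?(SY s).2 ?subr0.
by rewrite !mxE ((SX s).1 s_in i i_s) ((SY s).1 s_in i i_s) subr0.
Qed.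

Lemma SumPsigImg_subgroup : is_subgroup SumPsigImg.
Proof.
split=> [s _ | X Y QX QY s s_in]; rewrite !ffunE; first exact: (PsigImg_subgroup v s).1.
by apply: (PsigImg_subgroup v s).2; [apply: QX | apply: QY].
Qed.

Lemma in_piKE X : in_piK v Smax X <-> exists w, SumPsigImg (X - restr_sum w).
Proof.
by split=> [] [w Qw]; exists w => s s_in; move: (Qw s s_in); rewrite !ffunE s_in.
Qed.

Lemma in_piK_subgroup : is_subgroup (in_piK v Smax).
Proof.
split=> [|X Y /in_piKE [w QX] /in_piKE [w' QY]]; apply/in_piKE.
  by exists 0; rewrite restr_sum0 subrr; apply: SumPsigImg_subgroup.1.
exists (w - w'); rewrite restr_sumB.
rewrite (_ : X - Y - _ = X - restr_sum w - (Y - restr_sum w')); last by rewrite !opprD addrACA.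
exact: SumPsigImg_subgroup.2.
Qed.

Lemma SumPsigImg_in_piK X : SumPsigImg X -> in_piK v Smax X.
Proof. by move=> QX; apply/in_piKE; exists 0; rewrite restr_sum0 subr0. Qed.

Lemma in_Pic_restr_sum x : in_Pic v Smax x <-> SumPsigImg (restr_sum x).
Proof.
split=> [[D [cartD [m0 Dm0]]] s s_in | Qx].
  rewrite ffunE s_in; split; first exact: Fdual_restr.
  have [m Dm] := cartD s s_in s (subxx _).
  exists (pairing (m + m0)); split=> [y z _ _ | i i_s].
    by rewrite !pairingE mulmxDl mxE.
  rewrite mxE i_s -[x](subrK D) mxE Dm0 Dm //.
  by rewrite !pairingE linearD /= mulmxDr [RHS]mxE addrC.
exists x; split; last by exists 0 => i; rewrite subrr pairingE trmx0 mulmx0 !mxE.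
move=> s s_in tau tau_s; have := Qx s s_in; rewrite ffunE s_in => -[_ [phi [phiD phiv]]].
have [m phim] := Nsig_dual_pairing phiD; exists m => i i_tau.
have i_s := subsetP tau_s i i_tau.
by rewrite -phim // -phiv // mxE i_s.
Qed.

Lemma SumF_transversal (k : {set 'I_n} -> nat) (g : forall s, 'I_(k s) -> 'rV[int]_n) :
  (forall s, s \in Smax -> transversal (Fdual s) (PsigImg v s) (g s)) ->
  (forall s, s \notin Smax -> k s = 1%N) ->
  transversal (SumF Smax) SumPsigImg
    (fun X : {dffun forall s, 'I_(k s)} => [ffun s => if s \in Smax then g s (X s) else 0]).
Proof.
move=> trg k1; split.
- move=> X s; rewrite ffunE; case: ifP => s_in; split=> //.
  by have [Ag _ _] := trg s s_in.
- move=> X X' QX; apply/ffunP => s; case: (boolP (s \in Smax)) => s_in.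
    have [_ gQ _] := trg s s_in; apply: gQ.
    by have := QX s s_in; rewrite !ffunE s_in.
  by move: (X s) (X' s); rewrite k1 // => a b; rewrite (ord1 a) (ord1 b).
- move=> Y SY.
  have pick s : {t : 'I_(k s) | s \in Smax -> PsigImg v s (Y s - g s t)}.
    apply: cid; case: (boolP (s \in Smax)) => s_in.
      by have [_ _ /(_ _ ((SY s).1 s_in)) [t Qt]] := trg s s_in; exists t.
    have k_gt0 : (0 < k s)%N by rewrite k1.
    by exists (Ordinal k_gt0).
  have [ch Qch] := all_sig pick.
  by exists (finfun ch) => s s_in; rewrite !ffunE s_in; apply: Qch.
Qed.

Lemma Ksig_transversals : (forall s, s \in Smax -> lin_indep v s) ->
  exists (k : {set 'I_n} -> nat) (g : forall s, 'I_(k s) -> 'rV[int]_n),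
    (forall s, s \in Smax -> transversal (Fdual s) (PsigImg v s) (g s)) /\
    (forall s, s \notin Smax -> k s = 1%N).
Proof.
move=> indep.
have pick s : {kg : {k : nat & 'I_k -> 'rV[int]_n} |
    (s \in Smax -> transversal (Fdual s) (PsigImg v s) (projT2 kg)) /\
    (s \notin Smax -> projT1 kg = 1%N)}.
  apply: cid; case: (boolP (s \in Smax)) => s_in.
    have [k /transversal_quot_card [g trg]] := card_Ksig_exists (indep s s_in).
    by exists (existT _ k g).
  by exists (existT _ 1%N (fun _ => 0)).
have [kg kgP] := all_sig pick.
by exists (fun s => projT1 (kg s)), (fun s => projT2 (kg s)); split=> s; case: (kgP s).
Qed.

End Fan.

Theorem proposition2p7 (r n : nat) (v : 'I_n -> 'rV[int]_r)
    (Smax : {set {set 'I_n}}) :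
  simplicial_fan v Smax -> nondegenerate_rays v ->
  exists (idx khat : nat) (kS : {set 'I_n} -> nat),
    [/\ index_Cl_Pic v Smax idx,
        card_Khat v Smax khat,
        (forall s, s \in Smax -> card_Ksig v s (kS s))
      & (idx%:R : rat) = (khat%:R)^-1 * \prod_(s in Smax) (kS s)%:R].
Proof.
move=> [_ _ indep _ _] _.
have [k [g [trg k1]]] := Ksig_transversals indep.
have [khat [l [Khat_khat SQ_l card_eq]]] :=
  index_mul (SumF_subgroup Smax) (in_piK_subgroup v Smax) (SumPsigImg_subgroup v Smax)
    (@SumPsigImg_in_piK _ _ v Smax) (SumF_transversal trg k1).
exists l, khat, k; split=> //.
- exact: quot_card_preimage (restr_sumB Smax) (SumPsigImg_subgroup v Smax)
    (SumF_restr_sum Smax) (in_piKE v Smax) (in_Pic_restr_sum v Smax) SQ_l.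
- move=> s s_in; rewrite /card_Ksig -[k s]card_ord.
  exact: quot_card_transversal (trg s s_in).
have khat_gt0 := quot_card_gt0 (SumF_subgroup Smax).1 Khat_khat.
rewrite card_ord_dffun (bigID (mem Smax)) /= [X in (_ * X)%N]big1 ?muln1 in card_eq; last first.
  by move=> s /k1.
by rewrite -natr_prod card_eq natrM mulKf // pnatr_eq0 -lt0n.
Qed.
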